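(* Let $G$ be a finite simple graph, and let $V_0 \subseteq V(G)$ be reducible using $\mathcal{S}$ and $X$. Let $G' = (G - X) - V_0$. If $\tau(G') \leq 2\nu(G')$, then $\tau(G) \leq 2\nu(G)$.
   Context: $\nu(G)$ is the maximum number of pairwise edge-disjoint triangles in $G$; $\tau(G)$ is the minimum size of an edge set $Y$ with $G-Y$ triangle-free. For a set $\mathcal{S}$ of triangles, an $\mathcal{S}$-edge is an edge of some triangle in $\mathcal{S}$. A nonempty set $V_0 \subseteq V(G)$ is reducible using $\mathcal{S}$ and $X$, where $\mathcal{S}$ is a set of pairwise edge-disjoint triangles of $G$ and $X \subseteq E(G)$, if (i) $|X| \leq 2|\mathcal{S}|$; (ii) $G - X$ has no triangle containing a vertex of $V_0$; and (iii) $X$ contains every $\mathcal{S}$-edge whose endpoints both lie outside $V_0$. *)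

(* A finite simple graph on vertex type T : finType is given
   by its edge set E : {set {set T}}, every edge being a 2-element subset. *)
From mathcomp Require Import all_boot.
Set Implicit Arguments. Unset Strict Implicit. Unset Printing Implicit Defensive.

Section Triangles.
Variable T : finType.
Implicit Types (E Y X S : {set {set T}}) (t : {set T}).

Definition simple_graph E : Prop := forall e, e \in E -> #|e| = 2.

Definition triangle E t : bool :=
  (#|t| == 3) && [forall x in t, forall y in t, (x != y) ==> ([set x; y] \in E)].

Definition tri_edges t : {set {set T}} := [set e in powerset t | #|e| == 2].

Definition tri_packing E S : Prop :=
  (forall t, t \in S -> triangle E t) /\
  (forall t1 t2, t1 \in S -> t2 \in S -> t1 != t2 ->
     tri_edges t1 :&: tri_edges t2 = set0).

Definition tri_packingb E S : bool :=
  [forall t in S, triangle E t] &&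
  [forall t1 in S, forall t2 in S,
     (t1 != t2) ==> (tri_edges t1 :&: tri_edges t2 == set0)].

Definition nu E : nat := \max_(S : {set {set T}} | tri_packingb E S) #|S|.

Definition triangle_free E : bool := [forall t : {set T}, ~~ triangle E t].

Definition tau E : nat :=
  \big[minn/#|E|]_(Y : {set {set T}} | (Y \subset E) && triangle_free (E :\: Y)) #|Y|.

Definition del_edges E X : {set {set T}} := E :\: X.

(* G - V0 : delete the vertices of V0 (together with all incident edges);
   the vertex set is implicit, remaining isolated vertices are irrelevant *)
Definition del_vertices E (V0 : {set T}) : {set {set T}} := [set e in E | [disjoint e & V0]].

Definition S_edges S : {set {set T}} := \bigcup_(t in S) tri_edges t.

Definition reducible E (V0 : {set T}) S X : Prop :=
  V0 != set0 /\
  tri_packing E S /\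
  X \subset E /\
  #|X| <= 2 * #|S| /\
  (forall t, triangle (E :\: X) t -> [disjoint t & V0]) /\
  (forall e, e \in S_edges S -> [disjoint e & V0] -> e \in X).

End Triangles.

(* A minimum triangle cover Y' of G' = (G - X) - V0 together with X covers every
   triangle of G: a triangle avoiding X misses V0, hence lies in G' and is hit by Y'.
   A maximum triangle packing P of G' together with S is a packing of G: an edge of a
   triangle of G' has both ends outside V0 and lies outside X, so it is not an
   S-edge.  Hence tau(G) <= |Y'| + |X| <= 2 nu(G') + 2 |S| = 2 |P :|: S| <= 2 nu(G). *)

From HB Require Import structures.
From mathcomp Require Import all_boot.
Set Implicit Arguments. Unset Strict Implicit. Unset Printing Implicit Defensive.

(* minn has no unit on nat, but a commutative semigroup law is enough for bigD1. *)
HB.instance Definition _ := SemiGroup.isComLaw.Build nat minn minnA minnC.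

Lemma bigmin_le (I : finType) (P : pred I) (F : I -> nat) x j :
  P j -> \big[minn/x]_(i | P i) F i <= F j.
Proof. by move=> Pj; rewrite (bigD1 j) //= geq_minl. Qed.

Lemma big_selective_attained (R I : Type) (op : R -> R -> R) x r (P : pred I) F :
  (forall a b, op a b = a \/ op a b = b) -> (exists2 j, P j & F j = x) ->
  exists2 j, P j & \big[op/x]_(i <- r | P i) F i = F j.
Proof.
move=> op_sel [j0 Pj0 Fj0].
apply: (big_ind (fun m => exists2 j, P j & m = F j)).
- by exists j0.
- move=> _ _ [ja Pja ->] [jb Pjb ->].
  by case: (op_sel (F ja) (F jb)) => ->; [exists ja | exists jb].
- by move=> j Pj; exists j.
Qed.

Lemma minn_selective (a b : nat) : minn a b = a \/ minn a b = b.
Proof. by rewrite /minn; case: ifP; [left | right]. Qed.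

Lemma maxn_selective (a b : nat) : maxn a b = a \/ maxn a b = b.
Proof. by rewrite /maxn; case: ifP; [right | left]. Qed.

Section Triangles.
Variable T : finType.
Implicit Types (E P S X Y : {set {set T}}) (t e : {set T}).

Lemma tri_edgesP t e :
  reflect (exists x y, [/\ x \in t, y \in t, x != y & e = [set x; y]])
          (e \in tri_edges t).
Proof.
apply: (iffP idP) => [|[x [y [xt yt xy ->]]]].
  rewrite inE powersetE => /andP[et /cards2P [x [y [xy exy]]]].
  by exists x, y; split => //; apply: (subsetP et); rewrite exy !inE eqxx ?orbT.
rewrite inE powersetE cards2 xy eqxx andbT.
by apply/subsetP => z; rewrite !inE => /orP[]/eqP->.
Qed.

Lemma triangleE E t : triangle E t = (#|t| == 3) && (tri_edges t \subset E).
Proof.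
congr (_ && _); apply/forallP/subsetP => [Ht e /tri_edgesP [x [y [xt yt xy ->]]] | tE x].
  by move/implyP: (Ht x) => /(_ xt) /forallP /(_ y); rewrite yt xy.
apply/implyP => xt; apply/forallP => y; apply/implyP => yt; apply/implyP => xy.
by apply: tE; apply/tri_edgesP; exists x, y.
Qed.

Lemma triangle_mono E1 E2 t : E1 \subset E2 -> triangle E1 t -> triangle E2 t.
Proof. by move=> E12; rewrite !triangleE => /andP[-> /subset_trans]; apply. Qed.

Lemma tri_edges_neq0 t : 1 < #|t| -> tri_edges t != set0.
Proof.
case/card_gt1P => x [y [xt yt xy]].
by apply/set0Pn; exists [set x; y]; apply/tri_edgesP; exists x, y.
Qed.

Lemma triangle_tri_edges_neq0 E t : triangle E t -> tri_edges t != set0.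
Proof. by rewrite triangleE => /andP[/eqP t3 _]; apply: tri_edges_neq0; rewrite t3. Qed.

Lemma triangle_free0 : triangle_free (set0 : {set {set T}}).
Proof.
apply/forallP => t; apply/negP => /[dup] /triangle_tri_edges_neq0.
by rewrite triangleE subset0 => /negbTE ->; rewrite andbF.
Qed.

Lemma tri_packingP E S : reflect (tri_packing E S) (tri_packingb E S).
Proof.
apply: (iffP andP) => [[/forallP tri /forallP dis] | [tri dis]]; split.
- by move=> t tS; move/implyP: (tri t); apply.
- move=> t1 t2 t1S t2S t12; apply/eqP.
  by move/implyP: (dis t1) => /(_ t1S) /forallP /(_ t2); rewrite t2S t12.
- by apply/forallP => t; apply/implyP; apply: tri.
- apply/forallP => t1; apply/implyP => t1S; apply/forallP => t2; apply/implyP => t2S.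
  by apply/implyP => t12; rewrite dis.
Qed.

Lemma tau_le E Y : Y \subset E -> triangle_free (E :\: Y) -> tau E <= #|Y|.
Proof. by move=> YE tfY; apply: bigmin_le; rewrite YE. Qed.

Lemma tau_attained E :
  exists2 Y : {set {set T}}, (Y \subset E) && triangle_free (E :\: Y) & #|Y| = tau E.
Proof.
have coverE : (E \subset E) && triangle_free (E :\: E).
  by rewrite subxx setDv triangle_free0.
have [Y coverY eqY] := @big_selective_attained _ _ minn #|E| (index_enum _)
  (fun Y => (Y \subset E) && triangle_free (E :\: Y)) (fun Y => #|Y|)
  minn_selective (ex_intro2 _ _ E coverE erefl).
by exists Y; last exact: esym eqY.
Qed.

Lemma nu_ge E P : tri_packing E P -> #|P| <= nu E.
Proof. by move/tri_packingP => packP; apply: (leq_bigmax_cond _ packP). Qed.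

Lemma nu_attained E : exists2 P, tri_packing E P & #|P| = nu E.
Proof.
have pack0 : tri_packingb E set0 by apply/tri_packingP; split => t; rewrite inE.
have [P /tri_packingP packP eqP] := @big_selective_attained _ _ maxn 0 (index_enum _)
  (tri_packingb E) (fun P => #|P|) maxn_selective (ex_intro2 _ _ set0 pack0 (cards0 _)).
by exists P; last exact: esym eqP.
Qed.

Lemma tri_packing_union E P S :
  tri_packing E P -> tri_packing E S ->
  (forall t1 t2, t1 \in P -> t2 \in S -> tri_edges t1 :&: tri_edges t2 = set0) ->
  tri_packing E (P :|: S).
Proof.
move=> [triP disP] [triS disS] disPS; split.
  by move=> t; rewrite inE => /orP[]; [apply: triP | apply: triS].
move=> t1 t2; rewrite !inE => /orP[t1P|t1S] /orP[t2P|t2S] t12.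
- exact: disP.
- exact: disPS.
- by rewrite setIC disPS.
- exact: disS.
Qed.

Lemma tri_packing_disjoint E P S :
  tri_packing E P ->
  (forall t1 t2, t1 \in P -> t2 \in S -> tri_edges t1 :&: tri_edges t2 = set0) ->
  P :&: S = set0.
Proof.
move=> [triP _] disPS; apply/setP => t; rewrite !inE; apply/negP => /andP[tP tS].
by move: (triangle_tri_edges_neq0 (triP t tP)); rewrite -(setIid (tri_edges t)) (disPS t t tP tS) eqxx.
Qed.

Section Reduction.
Variables (E X S : {set {set T}}) (V0 : {set T}).
Hypothesis XE : X \subset E.
Hypothesis avoid_V0 : forall t, triangle (E :\: X) t -> [disjoint t & V0].
Hypothesis S_edges_in_X : forall e, e \in S_edges S -> [disjoint e & V0] -> e \in X.

Let G' := del_vertices (del_edges E X) V0.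

Lemma reduced_subset : G' \subset E.
Proof. by apply/subsetP => e; rewrite !inE => /andP[/andP[_ ->]]. Qed.

Lemma reduced_cover Y :
  Y \subset G' -> triangle_free (G' :\: Y) ->
  (Y :|: X \subset E) && triangle_free (E :\: (Y :|: X)).
Proof.
move=> YG' /forallP tfY; rewrite subUset XE (subset_trans YG' reduced_subset) /=.
apply/forallP => t; apply/negP => tri; apply: (negP (tfY t)).
have triX : triangle (E :\: X) t by apply: triangle_mono tri; rewrite setDS ?subsetUr.
move: tri; rewrite !triangleE => /andP[-> /subsetP tE] /=.
apply/subsetP => e et; move: (tE e et); rewrite !inE negb_or => /andP[/andP[eY eX] eE].
rewrite eY eX eE /=; apply: disjointWl (avoid_V0 triX).
by case/tri_edgesP: et => x [y [xt yt _ ->]]; rewrite subUset !sub1set xt yt.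
Qed.

Lemma reduced_tri_edges_disjoint t1 t2 :
  triangle G' t1 -> t2 \in S -> tri_edges t1 :&: tri_edges t2 = set0.
Proof.
rewrite triangleE => /andP[_ /subsetP t1G'] t2S.
apply/setP => e; rewrite in_setI in_set0; apply/negP => /andP[e1 e2].
move: (t1G' e e1); rewrite !inE => /andP[/andP[eX _] eV0].
by rewrite S_edges_in_X in eX => //; apply/bigcupP; exists t2.
Qed.

End Reduction.

End Triangles.

Theorem lemma2p2 (T : finType) (E : {set {set T}}) (V0 : {set T})
    (S X : {set {set T}}) :
  simple_graph E ->
  reducible E V0 S X ->
  let G' := del_vertices (del_edges E X) V0 in
  tau G' <= 2 * nu G' ->
  tau E <= 2 * nu E.
Proof.
move=> _ [_ [packS [XE [XS [avoid_V0 S_edges_in_X]]]]] G' tauG'.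
have [Y /andP[YG' tfY] cardY] := tau_attained G'.
have [P packP cardP] := nu_attained G'.
have [triP disP] := packP.
have disPS t1 t2 : t1 \in P -> t2 \in S -> tri_edges t1 :&: tri_edges t2 = set0.
  by move=> /triP t1G' t2S; apply: (reduced_tri_edges_disjoint S_edges_in_X t1G' t2S).
have packPS : tri_packing E (P :|: S).
  apply: tri_packing_union packS disPS; split => [t /triP|]; last exact: disP.
  exact/triangle_mono/reduced_subset.
have /andP[YXE tfYX] := reduced_cover XE avoid_V0 YG' tfY.
have tauE : tau E <= #|Y| + #|X| := leq_trans (tau_le YXE tfYX) (leq_card_setU _ _).
have cardPS : #|P :|: S| = #|P| + #|S|.
  by rewrite cardsU (tri_packing_disjoint packP disPS) cards0 subn0.
rewrite -cardY -cardP in tauG'.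
apply: leq_trans tauE (leq_trans (leq_add tauG' XS) _).
by rewrite -mulnDr leq_pmul2l // -cardPS nu_ge.
Qed.
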